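(* Let $q$ be a large prime, $m=o(\log q)$, and $t$ a positive integer with $t^m=o(\sqrt q)$. Let $s_2,\dots,s_{m-1}$ be the elements (other than $0,1$) of a uniformly random evaluation set, i.e. distinct random elements of $\mathbb{F}_q\setminus\{0,1\}$. Define \[A_0=\tfrac{1}{1-s_2}[t]+\cdots+\tfrac{1}{1-s_{m-1}}[t],\qquad A_1=\tfrac{1}{s_2}[t]+\cdots+\tfrac{1}{s_{m-1}}[t].\] Then with high probability (as $q\to\infty$), $|A_0|=\Omega(t^{m-2})$ and $|A_1|=\Omega(t^{m-2})$.
   Context: $[t]=\{1,\dots,t\}$ viewed as a subset of $\mathbb{F}_q$; for $\lambda\in\mathbb{F}_q$, $\lambda[t]=\{\lambda a: a\in[t]\}$; for subsets $A,B$ of an abelian group, $A+B=\{a+b: a\in A,b\in B\}$. *)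

From HB Require Import structures.
From mathcomp Require Import all_boot all_order all_algebra all_field.
From mathcomp Require Import reals exp Rstruct.
Set Implicit Arguments. Unset Strict Implicit. Unset Printing Implicit Defensive.
Import Order.TTheory GRing.Theory Num.Theory.
Local Open Scope ring_scope.

Notation RR := Rdefinitions.R.

Definition intv (F : finFieldType) (t : nat) : {set F} :=
  [set (i.+1)%:R | i : 'I_t].

Definition dil (F : finFieldType) (l : F) (A : {set F}) : {set F} :=
  [set l * a | a in A].

Definition sumset (F : finFieldType) (A B : {set F}) : {set F} :=
  [set a + b | a in A, b in B].

(* s : 'I_k -> F encodes (s_2, ..., s_{m-1}) with k = m - 2, s i = s_{i+2}. *)
Definition A0set (F : finFieldType) (k t : nat) (s : {ffun 'I_k -> F}) : {set F} :=
  \big[@sumset F/[set 0]]_(i < k) dil (1 - s i)^-1 (intv F t).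

Definition A1set (F : finFieldType) (k t : nat) (s : {ffun 'I_k -> F}) : {set F} :=
  \big[@sumset F/[set 0]]_(i < k) dil (s i)^-1 (intv F t).

Definition eval_tuple (F : finFieldType) (k : nat) (s : {ffun 'I_k -> F}) : bool :=
  injectiveb s && [forall i, (s i != 0) && (s i != 1)].

Definition prob (F : finFieldType) (k : nat) (E : pred {ffun 'I_k -> F}) : RR :=
  (#|[set s : {ffun 'I_k -> F} | eval_tuple s && E s]|%:R / #|[set s : {ffun 'I_k -> F} | eval_tuple s]|%:R).

From HB Require Import structures.
From mathcomp Require Import all_boot all_order all_algebra all_field.
From mathcomp Require Import reals exp Rstruct.
From mathcomp Require Import zify lra.
Import Order.TTheory GRing.Theory Num.Theory.
Local Open Scope ring_scope.
Set Implicit Arguments. Unset Strict Implicit.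

(* We prove the theorem with c = 1: with high probability both A_0 and A_1
   have the maximal size t^k, k = m - 2.  Write A_0 and A_1 as the sumsets
   v(s_1)[t] + ... + v(s_k)[t] for v(x) = 1/(1-x), resp. v(x) = 1/x.  The
   sumset has t^k elements as soon as the t^k weighted sums
   sum_i (a_i + 1) v(s_i) are pairwise distinct.  A collision between two
   weight vectors a <> b, differing at j, determines s_j from the other
   entries of s (as v is injective), so only a fraction 1/(q - k - 1) of the
   admissible tuples s suffer that collision; a union bound over the t^(2k)
   pairs (a, b) bounds the failure probability by 2 t^(2k) / (q - k - 1). *)

Section AdmissibleTuples.
Variables (F : finFieldType) (k : nat).

Definition adm : {set {ffun 'I_k -> F}} := [set s | eval_tuple s].

Definition forbidden (s : {ffun 'I_k -> F}) (j : 'I_k) : {set F} :=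
  0 |: (1 |: [set s i | i in [set~ j]]).

Lemma card_forbidden (s : {ffun 'I_k -> F}) (j : 'I_k) : (#|forbidden s j| <= k.+1)%N.
Proof.
have k_gt0 : (0 < k)%N by apply: leq_ltn_trans (ltn_ord j).
have others : (#|[set s i | i in [set~ j]]| <= k.-1)%N.
  by have := leq_imset_card s [set~ j]; rewrite cardsC1 card_ord.
rewrite /forbidden !cardsU1.
have := leq_b1 (0 \notin 1 |: [set s i | i in [set~ j]]).
have := leq_b1 (1 \notin [set s i | i in [set~ j]]).
lia.
Qed.

Definition upd (s : {ffun 'I_k -> F}) (j : 'I_k) (x : F) : {ffun 'I_k -> F} :=
  [ffun i => if i == j then x else s i].

Lemma upd_adm (s : {ffun 'I_k -> F}) (j : 'I_k) (x : F) :
  s \in adm -> x \notin forbidden s j -> upd s j x \in adm.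
Proof.
rewrite !inE negb_or => /andP[/injectiveP s_inj /forallP s01].
case/andP=> x0 /norP[x1 x_new]; apply/andP; split.
  have x_fresh i : i != j -> s i != x.
    by move=> ij; apply: contraNneq x_new => <-; rewrite imset_f // !inE.
  apply/injectiveP => i1 i2; rewrite !ffunE.
  case: (eqVneq i1 j) => [->|n1]; case: (eqVneq i2 j) => [->|n2] // e.
  - by move: (x_fresh _ n2); rewrite e eqxx.
  - by move: (x_fresh _ n1); rewrite e eqxx.
  - exact: s_inj.
by apply/forallP => i; rewrite ffunE; case: (i == j); rewrite ?x0 ?x1 ?s01.
Qed.

(* Key counting fact: if a set B of admissible tuples contains at most one
   tuple with any prescribed values off coordinate j, then it is a fraction
   at most 1/(|F| - k - 1) of the sample space: the map (s, x) |-> upd s j x,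
   for s in B and x not forbidden, is injective into the sample space and its
   domain has at least |B| (|F| - k - 1) elements. *)
Lemma fiber_bound (B : {set {ffun 'I_k -> F}}) (j : 'I_k) :
  B \subset adm ->
  (forall s s', s \in B -> s' \in B -> (forall i, i != j -> s i = s' i) -> s = s') ->
  (#|B| * (#|F| - k.+1) <= #|adm|)%N.
Proof.
move=> sBa detB.
pose D := [set p : {ffun 'I_k -> F} * F | (p.1 \in B) && (p.2 \notin forbidden p.1 j)].
have card_D : (#|B| * (#|F| - k.+1) <= #|D|)%N.
  have -> : #|D| = (\sum_(s in B) #|~: forbidden s j|)%N.
    rewrite -sum1_card (partition_big (fun p => p.1) (mem B)) /=; last first.
      by move=> p; rewrite inE => /andP[].
    apply: eq_bigr => s sB; rewrite -sum1_card (reindex (pair s)) /=; last first.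
      by exists snd => [x|[s' x]] //=; rewrite inE => /andP[/= _ /eqP <-].
    by apply: eq_bigl => x; rewrite !inE /= sB eqxx andbT.
  rewrite -sum_nat_const; apply: leq_sum => s _.
  by rewrite cardsCs setCK leq_sub2l // card_forbidden.
apply: leq_trans card_D _.
have upd_inj : {in D &, injective (fun p => upd p.1 j p.2)}.
  move=> [s x] [s' x']; rewrite !inE /= => /andP[sB _] /andP[s'B _] e.
  have at_i i : upd s j x i = upd s' j x' i by rewrite e.
  have := at_i j; rewrite !ffunE eqxx => ->; congr pair; apply: detB => // i ij.
  by have := at_i i; rewrite !ffunE (negPf ij).
rewrite -(card_in_imset upd_inj); apply/subset_leq_card/subsetP => y.
case/imsetP => [[s x]]; rewrite inE /= => /andP[sB xf] ->.
exact: upd_adm (subsetP sBa s sB) xf.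
Qed.

End AdmissibleTuples.

Lemma card_bigcup_le (I T : finType) (P : pred I) (B : I -> {set T}) :
  (#|\bigcup_(i | P i) B i| <= \sum_(i | P i) #|B i|)%N.
Proof.
elim/big_rec2: _ => [|i n U _ leUn]; first by rewrite cards0.
by rewrite (leq_trans (leq_card_setU _ _).1) ?leq_add2l.
Qed.

Section WeightedSums.
Variables (F : finFieldType) (k t : nat) (v : F -> F).

Definition wsum (s : {ffun 'I_k -> F}) (a : {ffun 'I_k -> 'I_t}) : F :=
  \sum_i ((a i).+1)%:R * v (s i).

Lemma wsum_mem (s : {ffun 'I_k -> F}) (a : {ffun 'I_k -> 'I_t}) :
  wsum s a \in \big[@sumset F/[set 0]]_(i < k) dil (v (s i)) (intv F t).
Proof.
rewrite /wsum; elim/big_rec2: _ => [|i X x _ xX]; first by rewrite inE.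
apply/imset2P; exists (((a i).+1)%:R * v (s i)) x => //.
apply/imsetP; exists ((a i).+1)%:R; last by rewrite mulrC.
by apply/imsetP; exists (a i).
Qed.

Lemma card_sumset_wsum (s : {ffun 'I_k -> F}) : injective (wsum s) ->
  (t ^ k <= #|\big[@sumset F/[set 0%R]]_(i < k) dil (v (s i)) (intv F t)|)%N.
Proof.
move=> inj; have -> : (t ^ k = #|[set wsum s a | a in [set: {ffun 'I_k -> 'I_t}]]|)%N.
  by rewrite card_imset // cardsT card_ffun !card_ord.
by apply/subset_leq_card/subsetP => _ /imsetP[a _ ->]; apply: wsum_mem.
Qed.

Hypothesis v_inj : injective v.
Hypothesis weights_distinct : forall x y : 'I_t, x != y -> ((x.+1)%:R != (y.+1)%:R :> F).

(* A collision between the weight vectors a and b, which differ at j, is a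
   linear relation that pins down v(s_j), hence s_j, from the other entries. *)
Lemma collision_determines (a b : {ffun 'I_k -> 'I_t}) (j : 'I_k) (s s' : {ffun 'I_k -> F}) :
  a j != b j -> wsum s a = wsum s b -> wsum s' a = wsum s' b ->
  (forall i, i != j -> s i = s' i) -> s = s'.
Proof.
move=> abj e e' agree.
pose c i : F := ((a i).+1)%:R - ((b i).+1)%:R.
have split u : wsum u a - wsum u b = c j * v (u j) + \sum_(i | i != j) c i * v (u i).
  by rewrite /wsum -sumrB (bigD1 j) //=; congr (_ + _); [|apply: eq_bigr => i _]; rewrite /c mulrBl.
have rest : \sum_(i | i != j) c i * v (s i) = \sum_(i | i != j) c i * v (s' i).
  by apply: eq_bigr => i /agree ->.
have cj : c j != 0 by rewrite subr_eq0 weights_distinct.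
have sj : s j = s' j.
  apply/v_inj/(mulfI cj)/(addIr (\sum_(i | i != j) c i * v (s i))).
  have := split s; have := split s'; rewrite -rest e e' !subrr.
  by move=> <- <-.
by apply/ffunP => i; case: (eqVneq i j) => [->|/agree].
Qed.

(* Admissible tuples on which some two weight vectors collide form a fraction
   at most t^k * t^k / (|F| - k - 1) of the sample space: union bound over the
   pairs (a, b), each contributing at most 1/(|F| - k - 1) by fiber_bound. *)
Lemma card_collisions :
  (#|[set s in adm F k | ~~ injectiveb (wsum s)]| * (#|F| - k.+1)
     <= (t ^ k * t ^ k) * #|adm F k|)%N.
Proof.
pose coll (p : {ffun 'I_k -> 'I_t} * {ffun 'I_k -> 'I_t}) :=
  [set s in adm F k | wsum s p.1 == wsum s p.2].
have cover : [set s in adm F k | ~~ injectiveb (wsum s)]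
               \subset \bigcup_(p | p.1 != p.2) coll p.
  apply/subsetP => s; rewrite inE => /andP[sa /injectivePn[a [b ab e]]].
  by apply/bigcupP; exists (a, b) => //; rewrite inE sa e /=.
have coll_small p : p.1 != p.2 -> (#|coll p| * (#|F| - k.+1) <= #|adm F k|)%N.
  move=> neq; have [j hj] : exists j, p.1 j != p.2 j.
    apply/existsP; apply: contraR neq; rewrite negb_exists => /forallP h.
    by apply/eqP/ffunP => i; apply/eqP/negPn.
  apply: (fiber_bound (j := j)); first by apply/subsetP => s; rewrite inE => /andP[].
  move=> s s'; rewrite !inE => /andP[_ /eqP e] /andP[_ /eqP e'].
  exact: collision_determines hj e e'.
have union := leq_trans (subset_leq_card cover)
                        (card_bigcup_le (fun p => p.1 != p.2) coll).
move: (leq_mul union (leqnn (#|F| - k.+1))) => /leq_trans; apply.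
rewrite big_distrl /=; apply: (@leq_trans (\sum_(p | p.1 != p.2) #|adm F k|)).
  by apply: leq_sum => p /coll_small.
apply: (@leq_trans (\sum_p #|adm F k|)).
  by rewrite [X in (X <= _)%N]big_mkcond; apply: leq_sum => p _; case: ifP.
by rewrite sum_nat_const card_prod card_ffun !card_ord.
Qed.

End WeightedSums.

Section PrimeField.
Variables (q : nat) (q_prime : prime q).

Lemma natr_Fp_inj (a b : nat) : (a < q)%N -> (b < q)%N -> (a%:R : 'F_q) = b%:R -> a = b.
Proof.
by move=> aq bq /(congr1 (fun x : 'F_q => x : nat)); rewrite !val_Fp_nat // !modn_small.
Qed.

Lemma weights_distinct_Fp (t : nat) : (t < q)%N ->
  forall x y : 'I_t, x != y -> (((x : nat).+1)%:R != ((y : nat).+1)%:R :> 'F_q).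
Proof.
move=> tq x y; apply: contraNneq => /natr_Fp_inj xy; apply/eqP/val_inj/succn_inj/xy.
- exact: leq_ltn_trans (ltn_ord x) tq.
- exact: leq_ltn_trans (ltn_ord y) tq.
Qed.

Lemma adm_Fp_nonempty (k : nat) : (k.+2 <= q)%N -> (0 < #|adm 'F_q k|)%N.
Proof.
move=> kq; apply/card_gt0P; exists [ffun i : 'I_k => ((i : nat).+2)%:R : 'F_q].
have small (i : 'I_k) : (i.+2 < q)%N by have := ltn_ord i; lia.
rewrite inE; apply/andP; split.
  apply/injectiveP => i j; rewrite !ffunE => /natr_Fp_inj e.
  by apply/val_inj/succn_inj/succn_inj/e.
have neq_small (i : 'I_k) n : (n < 2)%N -> ((i : nat).+2%:R != n%:R :> 'F_q).
  move=> n2; have nq : (n < q)%N by have := small i; lia.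
  by apply/eqP => /(natr_Fp_inj (small i) nq) e; move: n2; rewrite -e.
by apply/forallP => i; rewrite ffunE (neq_small i 0%N) // (neq_small i 1%N).
Qed.

Definition full_sumsets (k t : nat) (s : {ffun 'I_k -> 'F_q}) : bool :=
  ((t ^ k)%:R <= #|A0set t s|%:R :> RR) && ((t ^ k)%:R <= #|A1set t s|%:R :> RR).

(* Counting form of the main estimate: outside the collision sets for
   v = 1/(1-x) (giving A_0) and v = 1/x (giving A_1) both sumsets are full. *)
Lemma count_full_sumsets (k t : nat) : (t < q)%N -> exists bad : nat,
  (#|adm 'F_q k|
     <= #|[set s : {ffun 'I_k -> 'F_q} | eval_tuple s && full_sumsets t s]| + bad)%N /\
  (bad * (q - k.+1) <= 2 * (t ^ k * t ^ k) * #|adm 'F_q k|)%N.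
Proof.
move=> tq; have w_dist := weights_distinct_Fp tq.
have inv_sub_inj : injective (fun x : 'F_q => (1 - x)^-1).
  by move=> x y /invr_inj /addrI /oppr_inj.
pose bad0 := [set s in adm 'F_q k |
               ~~ injectiveb (wsum (t:=t) (fun x : 'F_q => (1 - x)^-1) s)].
pose bad1 := [set s in adm 'F_q k | ~~ injectiveb (wsum (t:=t) GRing.inv s)].
pose good := [set s : {ffun 'I_k -> 'F_q} | eval_tuple s && full_sumsets t s].
exists (#|bad0| + #|bad1|)%N; split.
  apply: leq_trans (_ : #|good :|: (bad0 :|: bad1)| <= _)%N.
    apply/subset_leq_card/subsetP => s; rewrite !inE => sa; rewrite sa /=.
    case: injectiveP => [inj0|_]; last by rewrite orbT.
    case: injectiveP => [inj1|_]; last by rewrite !orbT.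
    rewrite /full_sumsets /A0set /A1set !ler_nat.
    by rewrite (card_sumset_wsum inj0) (card_sumset_wsum inj1).
  by apply: leq_trans (leq_card_setU _ _).1 _; rewrite leq_add2l (leq_card_setU _ _).1.
have card0 := card_collisions k inv_sub_inj w_dist.
have card1 := card_collisions k (@invr_inj _) w_dist.
rewrite card_Fp // in card0 card1.
by rewrite mulnDl -mulnA mul2n -addnn; apply: leq_add.
Qed.

End PrimeField.

Lemma prob_mono (F : finFieldType) (k : nat) (E E' : pred {ffun 'I_k -> F}) :
  (forall s, eval_tuple s -> E s -> E' s) -> prob E <= prob E'.
Proof.
move=> EE'; rewrite /prob ler_wpM2r ?invr_ge0 ?ler0n // ler_nat.
by apply/subset_leq_card/subsetP => s; rewrite !inE => /andP[sa /(EE' s sa) ->]; rewrite sa.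
Qed.

Lemma proportion_lower (g a b Q X : nat) : (0 < a)%N -> (0 < Q)%N ->
  (a <= g + b)%N -> (b * Q <= X * a)%N -> 1 - X%:R / Q%:R <= g%:R / a%:R :> RR.
Proof.
move=> a_gt0 Q_gt0 cover bound.
have aR : (0 : RR) < a%:R by rewrite ltr0n.
have QR : (0 : RR) < Q%:R by rewrite ltr0n.
have bR : (b%:R : RR) <= X%:R * a%:R / Q%:R by rewrite ler_pdivlMr // -!natrM ler_nat.
have gR : (a%:R : RR) <= g%:R + b%:R by rewrite -natrD ler_nat.
rewrite ler_pdivlMr // (_ : _ * _ = a%:R - X%:R * a%:R / Q%:R); first by lra.
by rewrite mulrBl mul1r mulrAC.
Qed.

Lemma prob_full_sumsets (q k t : nat) : prime q -> (t < q)%N -> (k.+2 <= q)%N ->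
  1 - (2 * (t ^ k * t ^ k))%:R / (q - k.+1)%:R <= prob (@full_sumsets q k t).
Proof.
move=> q_prime tq kq; have [bad [cover bound]] := count_full_sumsets q_prime k tq.
apply: proportion_lower cover bound; first exact: adm_Fp_nonempty.
by rewrite subn_gt0.
Qed.

(* Since ln q <= q - 1, the hypothesis m <= (ln q) / 4 forces 4 m < q. *)
Lemma lt_of_quarter_log (M q : nat) : (0 < q)%N ->
  M%:R <= 1 / 4 * ln (q%:R : RR) -> (4 * M < q)%N.
Proof.
move=> q_gt0 hM; have q1 : (1 : RR) <= q%:R by rewrite ler1n.
have := @le_ln1Dx RR (q%:R - 1) ltac:(lra); rewrite addrC subrK => lnq.
by rewrite -(ltr_nat RR) natrM; lra.
Qed.

Lemma sqr_le_of_le_sqrt (x d y : RR) : 0 <= x -> 0 <= y ->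
  x <= d * Num.sqrt y -> x ^+ 2 <= d ^+ 2 * y.
Proof.
move=> x_ge0 y_ge0 le_x.
by rewrite -(sqr_sqrtr y_ge0) -exprMn !expr2 ler_pM // (le_trans x_ge0 le_x).
Qed.

(* The asymptotic hypotheses, specialized at q, give the parameter bounds
   needed by prob_full_sumsets and make the failure probability at most eps. *)
Lemma parameter_bounds (M T q : nat) (d eps : RR) :
  (2 <= M)%N -> (0 < T)%N -> (4 * M < q)%N ->
  ((T ^ M)%N%:R) ^+ 2 <= d ^+ 2 * q%:R -> d ^+ 2 <= Num.min 1 eps / 16 ->
  [/\ (T < q)%N, ((M - 2).+2 <= q)%N &
      (2 * (T ^ (M - 2) * T ^ (M - 2)))%N%:R / (q - (M - 2).+1)%N%:R <= eps].
Proof.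
move=> M2 T_gt0 Mq TM dsmall.
have [d1 deps] : d ^+ 2 <= 1 / 16 /\ d ^+ 2 <= eps / 16.
  have m1 : Num.min 1 eps <= 1 by rewrite ge_min lexx.
  have meps : Num.min 1 eps <= eps by rewrite ge_min lexx orbT.
  by split; lra.
have qR : (0 : RR) < q%:R by rewrite ltr0n; lia.
have X_le : ((T ^ (M - 2) * T ^ (M - 2))%N%:R : RR) <= ((T ^ M)%N%:R) ^+ 2.
  by rewrite expr2 -natrM ler_nat leq_mul // leq_pexp2l // leq_subr.
have T_le : (T%:R : RR) <= ((T ^ M)%N%:R) ^+ 2.
  rewrite expr2 -natrM ler_nat.
  apply: leq_trans (leq_pmulr _ _); last by rewrite expn_gt0 T_gt0.
  by rewrite -[X in (X <= _)%N]expn1 leq_pexp2l //; lia.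
have Q_ge : (3 / 4 * q%:R : RR) <= (q - (M - 2).+1)%N%:R.
  have : (3 * q <= 4 * (q - (M - 2).+1))%N by lia.
  by rewrite -(ler_nat RR) !natrM; lra.
split.
- by rewrite -(ltr_nat RR); nra.
- by lia.
- rewrite ler_pdivrMr; last by lra.
  by rewrite natrM; nra.
Qed.

Theorem mainTheorem8 (m t : nat -> nat) :
  (forall q, (2 <= m q)%N) ->
  (forall q, (0 < t q)%N) ->
  (forall eps : RR, 0 < eps -> exists N : nat, forall q : nat,
      prime q -> (N <= q)%N -> (m q)%:R <= eps * ln (q%:R : RR)) ->
  (forall eps : RR, 0 < eps -> exists N : nat, forall q : nat,
      prime q -> (N <= q)%N -> ((t q ^ m q)%N)%:R <= eps * Num.sqrt (q%:R : RR)) ->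
  exists c : RR, 0 < c /\
    forall eps : RR, 0 < eps -> exists N : nat, forall q : nat,
      prime q -> (N <= q)%N ->
      1 - eps <= prob (fun s : {ffun 'I_(m q - 2) -> 'F_q} =>
        (c * ((t q ^ (m q - 2))%N)%:R <= #|A0set (t q) s|%:R) &&
        (c * ((t q ^ (m q - 2))%N)%:R <= #|A1set (t q) s|%:R)).
Proof.
move=> m_ge2 t_gt0 m_log t_sqrt; exists 1; split=> [|eps eps_gt0]; first exact: ltr01.
pose d : RR := Num.min 1 eps / 4.
have min_gt0 : 0 < Num.min 1 eps by rewrite lt_min ltr01.
have d_gt0 : 0 < d by rewrite divr_gt0.
have d_small : d ^+ 2 <= Num.min 1 eps / 16.
  have : Num.min 1 eps <= 1 by rewrite ge_min lexx.
  by rewrite /d; nra.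
have [N1 hN1] := t_sqrt d d_gt0; have [N2 hN2] := m_log (1 / 4) ltac:(lra).
exists (maxn N1 N2) => q q_prime; rewrite geq_max => /andP[qN1 qN2].
have Mq := lt_of_quarter_log (prime_gt0 q_prime) (hN2 q q_prime qN2).
have TM := sqr_le_of_le_sqrt (ler0n _ _) (ler0n _ _) (hN1 q q_prime qN1).
have [Tq kq err] := parameter_bounds (m_ge2 q) (t_gt0 q) Mq TM d_small.
apply: le_trans (le_trans (prob_full_sumsets q_prime Tq kq) _); first by lra.
by apply: prob_mono => s _; rewrite !mul1r.
Qed.
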